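(* Let $T=(T,\eta,\mu)$ be a Kock–Zöberlein monad on a poset-enriched category $\mathcal{A}$. Let $a\colon T(X)\to X$ be a $T$-algebra, $c\colon X\to T(X)$ a $\overline{T}$-coalgebra on $a$, and $b\colon T(X)\to X$ a map satisfying $a\circ T(b)=b\circ\mu_X$ (so $b$ is an algebra map $\mu_X\to a$) and $c\circ b=T(b)\circ T(\eta_X)$ (so $b$ is a coalgebra map from $T(\eta_X)$ to $c$). Then the following are equivalent: (1) $b$ is an algebra of the monad $\overline{\overline{T}}$ on $c$, i.e. $b\circ c=\mathrm{id}_X$ and $b\circ T(b)=b\circ T(a)$; (2) $b\circ c=\mathrm{id}_X$ and $\mathrm{id}_{T(X)}\le c\circ b$, i.e. $b$ is a left adjoint left inverse of $c$ (a reflection $b\dashv c$).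
   Context: Poset-enriched category: hom-posets, monotone composition; $f\dashv g$ means $\mathrm{id}\le g\circ f$, $f\circ g\le\mathrm{id}$. Kock–Zöberlein monad: monotone on hom-posets and $T(\eta_X)\le\eta_{T(X)}$. $\overline{T}$ is the comonad on $T$-algebras with $\overline{T}(a)=\mu_X$, counit $a$, comultiplication $T(\eta_X)$; a $\overline{T}$-coalgebra on $a\colon TX\to X$ is $c\colon X\to TX$ with $c\circ a=\mu_X\circ T(c)$, $a\circ c=\mathrm{id}$, $T(\eta_X)\circ c=T(c)\circ c$. The forgetful functor from $\overline{T}$-coalgebras to $T$-algebras has a right adjoint sending an algebra on $Y$ to the coalgebra $T(\eta_Y)$ on $\mu_Y$; this induces a monad $\overline{\overline{T}}$ on $\overline{T}$-coalgebras with $\overline{\overline{T}}(c)=T(\eta_X)$ (on the algebra $\mu_X$), unit $c\colon c\to\overline{\overline{T}}(c)$, multiplication $T(a)$, and $\overline{\overline{T}}(b)=T(b)$ on morphisms. *)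

Set Implicit Arguments.
Unset Strict Implicit.

Record PosetCat := {
  Obj :> Type;
  Hom : Obj -> Obj -> Type;
  idm : forall A, Hom A A;
  comp : forall A B C, Hom B C -> Hom A B -> Hom A C;
  hle : forall A B, Hom A B -> Hom A B -> Prop;
  comp_id_l : forall A B (f : Hom A B), comp (idm B) f = f;
  comp_id_r : forall A B (f : Hom A B), comp f (idm A) = f;
  comp_assoc : forall A B C D (h : Hom C D) (g : Hom B C) (f : Hom A B),
      comp h (comp g f) = comp (comp h g) f;
  hle_refl : forall A B (f : Hom A B), hle f f;
  hle_trans : forall A B (f g h : Hom A B), hle f g -> hle g h -> hle f h;
  hle_antisym : forall A B (f g : Hom A B), hle f g -> hle g f -> f = g;
  comp_mono : forall A B C (g g' : Hom B C) (f f' : Hom A B),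
      hle g g' -> hle f f' -> hle (comp g f) (comp g' f')
}.

Arguments idm {_} A.
Arguments comp {_ A B C} g f.
Arguments hle {_ A B} f g.

Notation "g \o f" := (comp g f) (at level 40, left associativity).

Record Monad (C : PosetCat) := {
  T0 : C -> C;
  T1 : forall A B, Hom A B -> Hom (T0 A) (T0 B);
  T_id : forall A, T1 (idm A) = idm (T0 A);
  T_comp : forall A B D (g : Hom B D) (f : Hom A B),
      T1 (g \o f) = T1 g \o T1 f;
  T_mono : forall A B (f g : Hom A B), hle f g -> hle (T1 f) (T1 g);
  eta : forall A, Hom A (T0 A);
  mu : forall A, Hom (T0 (T0 A)) (T0 A);
  eta_nat : forall A B (f : Hom A B), T1 f \o eta A = eta B \o f;
  mu_nat : forall A B (f : Hom A B), T1 f \o mu A = mu B \o T1 (T1 f);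
  mu_eta_l : forall A, mu A \o eta (T0 A) = idm (T0 A);
  mu_eta_r : forall A, mu A \o T1 (eta A) = idm (T0 A);
  mu_assoc : forall A, mu A \o T1 (mu A) = mu A \o mu (T0 A)
}.

Arguments T0 {_} m A.
Arguments T1 {_} m {A B} f.
Arguments eta {_} m A.
Arguments mu {_} m A.

(* Kock–Zöberlein: T(eta_X) <= eta_{T X} (monotonicity is built into Monad). *)
Definition KZ (C : PosetCat) (T : Monad C) : Prop :=
  forall X, hle (T1 T (eta T X)) (eta T (T0 T X)).

Definition is_algebra (C : PosetCat) (T : Monad C) (X : C)
    (a : Hom (T0 T X) X) : Prop :=
  a \o eta T X = idm X /\ a \o T1 T a = a \o mu T X.

Definition is_Tbar_coalgebra (C : PosetCat) (T : Monad C) (X : C)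
    (a : Hom (T0 T X) X) (c : Hom X (T0 T X)) : Prop :=
  c \o a = mu T X \o T1 T c /\
  a \o c = idm X /\
  T1 T (eta T X) \o c = T1 T c \o c.

Arguments KZ {C} T.
Arguments is_algebra {C} T X a.
Arguments is_Tbar_coalgebra {C} T X a c.


Set Implicit Arguments.
Unset Strict Implicit.

(* The proof rests on two inequalities valid for any KZ monad:
   - every retraction a of eta_X satisfies id <= eta_X o a;
   - every Tbar-coalgebra c on a satisfies c <= eta_X.
   With these, and the coalgebra-map equation c o b = T(b o eta_X):
   - (1) => (2): id = T(b o c) <= T(b o eta_X) = c o b;
   - (2) => (1): the unit id <= c o b forces a <= b, whence
     b o T(a) <= b o T(b); conversely id <= eta_X o a gives
     T(b) <= c o b o T(a), whence b o T(b) <= b o T(a).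
   Neither direction needs the algebra-map equation for b, nor the first
   coalgebra law c o a = mu_X o T(c). *)

Section PosetCatFacts.

Variable C : PosetCat.

Lemma hle_of_eq (A B : C) (f g : Hom A B) : f = g -> hle f g.
Proof. intros ->. apply hle_refl. Qed.

Lemma comp_mono_l (A B D : C) (g : Hom B D) (f f' : Hom A B) :
  hle f f' -> hle (g \o f) (g \o f').
Proof. intro H. apply comp_mono; [apply hle_refl | exact H]. Qed.

Lemma comp_mono_r (A B D : C) (g g' : Hom B D) (f : Hom A B) :
  hle g g' -> hle (g \o f) (g' \o f).
Proof. intro H. apply comp_mono; [exact H | apply hle_refl]. Qed.

(* If r is a retraction of s and l satisfies id <= s o l (the unit of an
   adjunction l -| s), then r <= l: r = r o id <= r o s o l = l. *)
Lemma retraction_below_left_adjoint (A B : C)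
    (r l : Hom B A) (s : Hom A B) :
  r \o s = idm A -> hle (idm B) (s \o l) -> hle r l.
Proof.
  intros Hrs Hunit.
  apply hle_trans with (r \o (s \o l)).
  - apply hle_trans with (r \o idm B).
    + apply hle_of_eq. symmetry. apply comp_id_r.
    + apply comp_mono_l. exact Hunit.
  - apply hle_of_eq. rewrite comp_assoc, Hrs. apply comp_id_l.
Qed.

End PosetCatFacts.

Section KZInequalities.

Variables (C : PosetCat) (T : Monad C).
Hypothesis HKZ : KZ T.

(* For any retraction a of eta_X, the idempotent eta_X o a lies above id:
   id = T(a) o T(eta_X) <= T(a) o eta_(T X) = eta_X o a. *)
Lemma id_below_unit_retraction (X : C) (a : Hom (T0 T X) X) :
  a \o eta T X = idm X -> hle (idm (T0 T X)) (eta T X \o a).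
Proof.
  intro Ha.
  rewrite <- eta_nat, <- (T_id T X), <- Ha, T_comp.
  apply comp_mono_l. apply HKZ.
Qed.

(* A Tbar-coalgebra lies below the unit:
   c = T(a) o T(c) o c = T(a) o T(eta_X) o c <= T(a) o eta_(T X) o c
     = eta_X o a o c = eta_X. *)
Lemma coalgebra_below_unit (X : C) (a : Hom (T0 T X) X) (c : Hom X (T0 T X)) :
  a \o c = idm X -> T1 T (eta T X) \o c = T1 T c \o c -> hle c (eta T X).
Proof.
  intros Hac Hcoass.
  apply hle_trans with (T1 T a \o (T1 T (eta T X) \o c)).
  - apply hle_of_eq.
    rewrite Hcoass, comp_assoc, <- T_comp, Hac, T_id, comp_id_l. reflexivity.
  - rewrite comp_assoc. apply hle_trans with (T1 T a \o eta T (T0 T X) \o c).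
    + apply comp_mono_r, comp_mono_l, HKZ.
    + apply hle_of_eq. rewrite eta_nat, <- comp_assoc, Hac. apply comp_id_r.
Qed.

End KZInequalities.

Section CoalgebraMaps.

Variables (C : PosetCat) (T : Monad C) (X : C).
Variables (c : Hom X (T0 T X)) (b : Hom (T0 T X) X).
Hypothesis Hb_coalg : c \o b = T1 T b \o T1 T (eta T X).

(* A section c below eta_X makes b -| c a reflection:
   id = T(b o c) <= T(b o eta_X) = c o b. *)
Lemma reflection_of_section_below_unit :
  b \o c = idm X -> hle c (eta T X) -> hle (idm (T0 T X)) (c \o b).
Proof.
  intros Hbc Hce.
  rewrite Hb_coalg, <- T_comp, <- (T_id T X), <- Hbc.
  apply T_mono, comp_mono_l, Hce.
Qed.

(* If a satisfies id <= eta_X o a, then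
   b o T(b) <= b o T(b o eta_X o a) = b o c o b o T(a) = b o T(a). *)
Lemma mult_below_action (a : Hom (T0 T X) X) :
  b \o c = idm X -> hle (idm (T0 T X)) (eta T X \o a) ->
  hle (b \o T1 T b) (b \o T1 T a).
Proof.
  intros Hbc Hea.
  apply hle_trans with (b \o (c \o b \o T1 T a)).
  - apply comp_mono_l.
    rewrite Hb_coalg, <- !T_comp, <- comp_assoc.
    apply T_mono. apply hle_trans with (b \o idm (T0 T X)).
    + apply hle_of_eq. symmetry. apply comp_id_r.
    + apply comp_mono_l, Hea.
  - apply hle_of_eq. rewrite !comp_assoc, Hbc, comp_id_l. reflexivity.
Qed.

End CoalgebraMaps.

Theorem lemma4p3 (C : PosetCat) (T : Monad C) (HKZ : KZ T) (X : C)
    (a : Hom (T0 T X) X) (Ha : is_algebra T X a)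
    (c : Hom X (T0 T X)) (Hc : is_Tbar_coalgebra T X a c)
    (b : Hom (T0 T X) X)
    (Hb_alg : a \o T1 T b = b \o mu T X)
    (Hb_coalg : c \o b = T1 T b \o T1 T (eta T X)) :
  (b \o c = idm X /\ b \o T1 T b = b \o T1 T a) <->
  (b \o c = idm X /\ hle (idm (T0 T X)) (c \o b)).
Proof.
  destruct Ha as [Ha_unit _]. destruct Hc as [_ [Hac Hcoass]].
  split.
  - intros [Hbc _]. split; [exact Hbc |].
    exact (reflection_of_section_below_unit Hb_coalg Hbc
             (coalgebra_below_unit HKZ Hac Hcoass)).
  - intros [Hbc Hunit]. split; [exact Hbc |].
    apply hle_antisym.
    + exact (mult_below_action Hb_coalg Hbc (id_below_unit_retraction HKZ Ha_unit)).
    + apply comp_mono_l, T_mono.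
      exact (retraction_below_left_adjoint Hac Hunit).
Qed.
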